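(* Let $n\geqslant2$ be even. Then either $R[n/2]$ has maximal size among all rainbows on $\{0,\dots,n\}$, or both $R[0]$ and $R[n]$ have maximal size among all rainbows on $\{0,\dots,n\}$.
   Context: An arc is a pair $\underline{x}\to\underline{y}$ of integers $0\leqslant x<y\leqslant n$, with weight $\binom{n}{x,\,y-x,\,n-y}=\frac{n!}{x!(y-x)!(n-y)!}$. A rainbow on $\{0,\dots,n\}$ is a set of arcs $\{\underline{x_i}\to\underline{y_i}\}_{0\leqslant i\leqslant m}$ with $x_0<x_1<\dots<x_m<y_m<\dots<y_0$; its size is the sum of the weights of its arcs. For $n$ even and $0\leqslant x\leqslant n$, $R[x]$ denotes the unique rainbow with $\frac n2$ arcs whose set of endpoints is $\{0,\dots,n\}\setminus\{x\}$. *)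

From mathcomp Require Import all_boot.
Set Implicit Arguments. Unset Strict Implicit. Unset Printing Implicit Defensive.

(* An arc x -> y is a pair (x, y) of naturals with 0 <= x < y <= n. *)
Definition arc_weight (n : nat) (a : nat * nat) : nat :=
  n`! %/ ((a.1)`! * (a.2 - a.1)`! * (n - a.2)`!).

(* A rainbow on {0..n}: a nonempty list of arcs [(x_0,y_0); ...; (x_m,y_m)]
   with x_0 < x_1 < ... < x_m < y_m < ... < y_0 <= n. *)
Definition nested (p q : nat * nat) : bool := (p.1 < q.1) && (q.2 < p.2).

Definition is_rainbow (n : nat) (s : seq (nat * nat)) : bool :=
  [&& s != [::], sorted nested s & all (fun a => (a.1 < a.2) && (a.2 <= n)) s].

Definition rainbow_size (n : nat) (s : seq (nat * nat)) : nat :=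
  sumn [seq arc_weight n a | a <- s].

(* R[x] for n even: the unique rainbow with n/2 arcs whose endpoint set is
   {0..n} \ {x}: list the remaining points increasingly as l_0 < ... < l_{n-1}
   and take the arcs l_i -> l_{n-1-i} for i < n/2. *)
Definition R_points (n x : nat) : seq nat := [seq i <- iota 0 n.+1 | i != x].

Definition R_rainbow (n x : nat) : seq (nat * nat) :=
  [seq (nth 0 (R_points n x) i, nth 0 (R_points n x) (n.-1 - i)) | i <- iota 0 n./2].

Definition max_size (n : nat) (s : seq (nat * nat)) : Prop :=
  forall t, is_rainbow n t -> rainbow_size n t <= rainbow_size n s.

(* An arc of length b = y - x has weight 'C(n, b) * 'C(n - b, x), which is at most
   M(b) = 'C(n, b) * 'C(n - b, (n - b)/2), with equality for arcs centred in {0..n}.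
   The arcs of a rainbow are strictly nested, so their lengths drop by at least 2 and
   its size is at most the sum of M over a 2-separated subset of {1..n}.
   Since M(b+1) (b+1) = M(b) ceil((n - b)/2), M is unimodal, and for a unimodal weight
   the heaviest 2-separated subset of {1..m} is one of the two parity classes
   {m, m-2, ...} and {m-1, m-3, ...}. For n even, R[n/2] consists of centred arcs of
   lengths n, n-2, ..., 2, and R[0], R[n] of centred arcs of lengths n-1, ..., 3, 1. *)

From mathcomp Require Import all_boot zify.
Set Implicit Arguments. Unset Strict Implicit. Unset Printing Implicit Defensive.

Lemma leq_bin_succ m x : x < m./2 -> 'C(m, x) <= 'C(m, x.+1).
Proof.
move=> lt_x_half; rewrite -(@leq_pmul2l x.+1) // mul_bin_left leq_mul2r.
by apply/orP; right; lia.
Qed.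

Lemma leq_bin_half m x : 'C(m, x) <= 'C(m, m./2).
Proof.
wlog le_x_half : x / x <= m./2.
  move=> bin_le; case: (leqP x m./2) => [|lt_half_x]; first exact: bin_le.
  case: (leqP x m) => [le_xm | /bin_small-> //].
  by rewrite -bin_sub //; apply: bin_le; lia.
suff bin_le d : x + d <= m./2 -> 'C(m, x) <= 'C(m, x + d).
  by have := bin_le (m./2 - x); rewrite subnKC //; apply.
elim: d => [|d IHd] le_xd_half; first by rewrite addn0.
by rewrite addnS (leq_trans (IHd _)) ?leq_bin_succ //; lia.
Qed.

Lemma mul_bin_half_pred c : c * 'C(c.-1, c.-1./2) = uphalf c * 'C(c, c./2).
Proof.
case: c => [|c] //=.
have -> : 'C(c, c./2) = 'C(c, uphalf c).
  case: (boolP (odd c)) => odd_c; first by rewrite -bin_sub; [congr 'C(_, _)|]; lia.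
  by congr 'C(_, _); lia.
have := mul_bin_down c.+1 (uphalf c); rewrite /= => ->.
by congr (_ * _); lia.
Qed.

Lemma arc_weight_bin n x y : x <= y <= n ->
  arc_weight n (x, y) = 'C(n, y - x) * 'C(n - (y - x), x).
Proof.
case/andP=> le_xy le_yn; rewrite /arc_weight /=.
have fact_n := @bin_fact n (y - x); have fact_nb := @bin_fact (n - (y - x)) x.
have -> : n - y = n - (y - x) - x by lia.
rewrite -fact_n -?fact_nb; try lia.
set A := 'C(n, y - x); set B := 'C(n - (y - x), x).
set a := x`!; set b := (y - x)`!; set c := (n - (y - x) - x)`!.
have -> : A * (b * (B * (a * c))) = A * B * (a * b * c) by lia.
by rewrite mulnK // !muln_gt0 !fact_gt0.
Qed.

Definition unimodal (f : nat -> nat) :=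
  forall a b, a <= b -> f b < f b.+1 -> f a <= f a.+1.

Section ParitySums.

Variable f : nat -> nat.

Definition parity_sum m := \sum_(i < uphalf m) f (m - i.*2).

Definition parity_bound m := maxn (parity_sum m) (parity_sum m.-1).

Lemma parity_sum0 : parity_sum 0 = 0.
Proof. by rewrite /parity_sum big_ord0. Qed.

Lemma parity_sumS m : parity_sum m.+1 = f m.+1 + parity_sum m.-1.
Proof.
case: m => [|m]; first by rewrite /parity_sum big_ord_recl big_ord0.
rewrite /parity_sum /= big_ord_recl /=.
by congr (_ + _); apply: eq_bigr => i _; congr f; lia.
Qed.

Lemma leq_parity_sum_pred m :
  (forall a, a < m -> f a <= f a.+1) -> parity_sum m.-1 <= parity_sum m.
Proof.
elim/ltn_ind: m => [[|[|m]]] // IHm rising; first by rewrite parity_sum0.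
rewrite !parity_sumS /= leq_add ?rising ?IHm // => a lt_am.
by apply: rising; lia.
Qed.

Lemma parity_bound_homo : {homo parity_bound : a b / a <= b}.
Proof.
apply: homo_leq => [//|b a c|m]; first exact: leq_trans.
rewrite /parity_bound geq_max leq_maxr /=.
case: m => [|m]; first by rewrite parity_sum0.
by rewrite parity_sumS leq_max leq_addl.
Qed.

Hypothesis f_unimodal : unimodal f.

Lemma parity_bound_step m : f m.+1 + parity_bound m.-1 <= parity_bound m.+1.
Proof.
rewrite /parity_bound parity_sumS /=.
case: (leqP (parity_sum m.-2) (parity_sum m.-1)) => [_ | sum_lt]; first exact: leq_maxl.
case: m sum_lt => [|m] sum_lt; first by rewrite ltnn in sum_lt.
case: (leqP (f m.+2) (f m.+1)) => [fall | rise].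
  by rewrite parity_sumS leq_max leq_add2r fall orbT.
have rising a : a < m -> f a <= f a.+1 by move=> lt_am; apply: (f_unimodal _ rise); lia.
by have := leq_parity_sum_pred rising; rewrite leqNgt sum_lt.
Qed.

Lemma sum_separated_le s m :
  sorted [rel a b | b.+1 < a] s -> all [pred b | 0 < b <= m] s ->
  \sum_(b <- s) f b <= parity_bound m.
Proof.
elim: s m => [|b s IHs] m sorted_bs /=; first by rewrite big_nil.
case/andP=> /andP[b_gt0 le_bm] bounded_s.
rewrite big_cons (leq_trans _ (parity_bound_homo le_bm)) //.
case: b b_gt0 sorted_bs {le_bm} => // b _ sorted_bs.
apply: leq_trans (parity_bound_step b); rewrite leq_add2l IHs ?(path_sorted sorted_bs) //.
have gap_trans : transitive [rel a b : nat | b.+1 < a] by move=> y x z /=; lia.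
have below_b := order_path_min gap_trans sorted_bs.
apply/allP => c c_s; have := allP below_b c c_s; have := allP bounded_s c c_s; rewrite /=.
lia.
Qed.

End ParitySums.

Definition peak_weight n b := 'C(n, b) * 'C(n - b, (n - b)./2).

Lemma arc_weight_le_peak n a : a.1 <= a.2 <= n ->
  arc_weight n a <= peak_weight n (a.2 - a.1).
Proof.
by case: a => x y /= bounds; rewrite arc_weight_bin // leq_mul2l leq_bin_half orbT.
Qed.

Lemma arc_weight_balanced n x y : x <= y <= n -> n - y - x <= 1 -> x - (n - y) <= 1 ->
  arc_weight n (x, y) = peak_weight n (y - x).
Proof.
move=> /andP[le_xy le_yn] bal_l bal_r; rewrite arc_weight_bin ?le_xy // /peak_weight.
case: (leqP x (n - y)) => [le_x_ny | lt_ny_x]; first by congr (_ * 'C(_, _)); lia.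
by rewrite -(@bin_sub (n - (y - x)) x); [congr (_ * 'C(_, _)) | ]; lia.
Qed.

Lemma peak_weight_ratio n b : b < n ->
  peak_weight n b.+1 * b.+1 = peak_weight n b * uphalf (n - b).
Proof.
move=> lt_bn; rewrite /peak_weight subnS mulnAC [_ * b.+1]mulnC mul_bin_left.
by rewrite -mulnA mulnCA mul_bin_half_pred [uphalf _ * _]mulnC mulnA.
Qed.

Lemma peak_weight_unimodal n : unimodal (peak_weight n).
Proof.
move=> a b le_ab rise_b.
have lt_bn : b < n.
  rewrite ltnNge; apply: contraTN rise_b => le_nb.
  by rewrite /peak_weight (@bin_small n b.+1).
have lt_b_half : b.+1 < uphalf (n - b).
  rewrite ltnNge; apply: contraTN rise_b => le_half_b; rewrite -leqNgt.
  rewrite -(leq_pmul2r (ltn0Sn b)) peak_weight_ratio // leq_mul2l le_half_b orbT //.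
rewrite -(leq_pmul2r (ltn0Sn a)) peak_weight_ratio; last lia.
by rewrite leq_mul2l; apply/orP; right; lia.
Qed.

Lemma rainbow_size_le_parity_bound n t :
  is_rainbow n t -> rainbow_size n t <= parity_bound (peak_weight n) n.
Proof.
case/and3P=> _ sorted_t arcs_t; rewrite /rainbow_size sumnE big_map.
apply: (@leq_trans (\sum_(a <- t) peak_weight n (a.2 - a.1))).
  rewrite big_seq_cond [leqRHS]big_seq_cond; apply: leq_sum => a /andP[a_t _].
  by apply: arc_weight_le_peak; have /andP[] := allP arcs_t a a_t; lia.
rewrite -(big_map (fun a => a.2 - a.1) xpredT); apply: sum_separated_le.
  exact: peak_weight_unimodal.
rewrite sorted_map; apply: sub_in_sorted arcs_t sorted_t => p q _.
  by rewrite unfold_in => /andP[lt_q _] /andP[] /=; lia.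
apply/allP=> _ /mapP[a a_t ->] /=.
by have /andP[] := allP arcs_t a a_t; lia.
Qed.

Lemma R_points_half k : R_points k.*2 k = iota 0 k ++ iota k.+1 k.
Proof.
rewrite /R_points -addnn -addnS iotaD filter_cat /= eqxx /=.
by congr (_ ++ _); apply/all_filterP/allP => i; rewrite mem_iota; lia.
Qed.

Lemma R_points_first n : R_points n 0 = iota 1 n.
Proof. by rewrite /R_points /=; apply/all_filterP/allP => i; rewrite mem_iota; lia. Qed.

Lemma R_points_last n : R_points n n = iota 0 n.
Proof.
rewrite /R_points -addn1 iotaD filter_cat /= eqxx cats0.
by apply/all_filterP/allP => i; rewrite mem_iota; lia.
Qed.

Lemma rainbow_size_R n x : rainbow_size n (R_rainbow n x) =
  \sum_(i < n./2) arc_weight n (nth 0 (R_points n x) i, nth 0 (R_points n x) (n.-1 - i)).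
Proof.
rewrite /rainbow_size -map_comp sumnE big_map.
by rewrite -{1}[n./2]subn0 -/(index_iota 0 _) big_mkord.
Qed.

Lemma rainbow_size_R_half k :
  rainbow_size k.*2 (R_rainbow k.*2 k) = parity_sum (peak_weight k.*2) k.*2.
Proof.
rewrite rainbow_size_R doubleK /parity_sum uphalf_double; apply: eq_bigr => -[i /= lt_ik] _.
rewrite R_points_half !nth_cat size_iota lt_ik ifF; last lia.
rewrite !nth_iota ?arc_weight_balanced; try lia.
by congr peak_weight; lia.
Qed.

Lemma rainbow_size_R_first k :
  rainbow_size k.*2 (R_rainbow k.*2 0) = parity_sum (peak_weight k.*2) k.*2.-1.
Proof.
rewrite rainbow_size_R doubleK /parity_sum.
have -> : uphalf k.*2.-1 = k by lia.
apply: eq_bigr => -[i /= lt_ik] _.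
rewrite R_points_first !nth_iota ?arc_weight_balanced; try lia.
by congr peak_weight; lia.
Qed.

Lemma rainbow_size_R_last k :
  rainbow_size k.*2 (R_rainbow k.*2 k.*2) = parity_sum (peak_weight k.*2) k.*2.-1.
Proof.
rewrite rainbow_size_R doubleK /parity_sum.
have -> : uphalf k.*2.-1 = k by lia.
apply: eq_bigr => -[i /= lt_ik] _.
rewrite R_points_last !nth_iota ?arc_weight_balanced; try lia.
by congr peak_weight; lia.
Qed.

Theorem lemma5p13 (n : nat) (Hn : 2 <= n) (Heven : ~~ odd n) :
  max_size n (R_rainbow n n./2) \/
  (max_size n (R_rainbow n 0) /\ max_size n (R_rainbow n n)).
Proof.
have [k ->] : exists k, n = k.*2.
  by exists n./2; rewrite -[LHS]odd_double_half (negbTE Heven).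
rewrite doubleK; have := @rainbow_size_le_parity_bound k.*2; rewrite /parity_bound.
set f := peak_weight k.*2.
case: (leqP (parity_sum f k.*2.-1) (parity_sum f k.*2)) => _ bound;
  [left | right; split] => t /bound;
  by rewrite ?rainbow_size_R_half ?rainbow_size_R_first ?rainbow_size_R_last.
Qed.
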